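(* Let $G$ be a connected graph of order $n$, minimum degree $\delta \geq 3$ and maximum degree $\Delta$, and let $N = n-\Delta+\delta$. Then \[ \mu(G) \leq \frac{N(N-1)}{n(n-1)}\cdot \frac{n+2\Delta}{\delta+1} + 4 . \] Equivalently, $W(G) \le \binom{N}{2}\frac{n+2\Delta}{\delta+1} + 2n(n-1)$.
   Context: For a connected graph $G$ with vertex set $V(G)$, $d_G(u,v)$ denotes the usual shortest-path distance. The Wiener index is $W(G)=\sum_{\{u,v\}\subseteq V(G)} d_G(u,v)$ (sum over unordered pairs of distinct vertices), and the average distance of a connected graph of order $n\ge 2$ is $\mu(G)=\binom{n}{2}^{-1}W(G)$. *)

From mathcomp Require Import all_boot all_order all_algebra.
Set Implicit Arguments. Unset Strict Implicit. Unset Printing Implicit Defensive.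

Definition simple_graph (T : finType) (e : rel T) : Prop :=
  symmetric e /\ irreflexive e.

Definition connected_graph (T : finType) (e : rel T) : Prop :=
  forall x y : T, connect e x y.

Definition deg (T : finType) (e : rel T) (x : T) : nat := #|[set y | e x y]|.

(* minimum and maximum degree (n >= 1 is ensured by the hypotheses) *)
Definition mindeg (T : finType) (e : rel T) : nat :=
  \big[minn/#|T|]_(x : T) deg e x.
Definition maxdeg (T : finType) (e : rel T) : nat :=
  \max_(x : T) deg e x.

Fixpoint ball (T : finType) (e : rel T) (k : nat) (x : T) : {set T} :=
  match k with
  | 0 => [set x]
  | k'.+1 => ball e k' x :|: [set z | [exists w in ball e k' x, e w z]]
  end.

(* shortest-path distance: least k with y in ball k x (any shortest path has
   length < #|T|; for connected graphs this is the usual distance). *)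
Definition dist (T : finType) (e : rel T) (x y : T) : nat :=
  find (fun k => y \in ball e k x) (iota 0 #|T|).

(* Wiener index: sum over unordered pairs of distinct vertices
   = half of the sum over ordered pairs (d(x,x) = 0). *)
Definition wiener (T : finType) (e : rel T) : nat :=
  (\sum_(x : T) \sum_(y : T) dist e x y) %/ 2.

Definition avg_dist (T : finType) (e : rel T) : rat :=
  ((wiener e)%:R / ('C(#|T|, 2))%:R)%R.

(* Let G be connected of order n, with minimum degree delta >= 3 and maximum
   degree Delta attained at z; put w = delta + 1, h = Delta + 1.
   1. Greedily choose centers from z: each new one is at distance >= 3 from
      all earlier ones and exactly 3 from one of them.  At saturation every
      vertex is within distance 2 of a center.
   2. Assign each vertex to a nearest center.  Centers being 3 apart, each
      owns its closed neighbourhood: cell sizes are a_s >= w and a_z >= h.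
      As d(x,y) <= d(c x, c y) + 4, the sum of all distances is at most
      E + 4 n^2 with E = sum_{s,t} a_s a_t d(s,t).
   3. By induction along the centers, w E <= G(M) for an explicit cubic G of
      the total weight M; a new center is controlled through its levels in
      the graph "distance <= 3" on the centers, each level weighing >= w.
   4. With M = n, an elementary inequality gives
      2 w W(G) <= N (N - 1) (n + 2 Delta) + 4 w n (n - 1), N = n - Delta + delta,
      which is the theorem after division by w n (n - 1). *)

From mathcomp Require Import all_boot all_order all_algebra.
From mathcomp Require Import zify ring lra.
Set Implicit Arguments. Unset Strict Implicit. Unset Printing Implicit Defensive.
Import Order.TTheory GRing.Theory Num.Theory.

Section Balls.
Variables (T : finType) (r : rel T).

Lemma ballS k x :
  ball r k.+1 x = ball r k x :|: [set z | [exists w in ball r k x, r w z]].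
Proof. by []. Qed.

Lemma in_ball0 x y : (y \in ball r 0 x) = (y == x).
Proof. by rewrite /= in_set1. Qed.

Lemma ball_self x k : x \in ball r k x.
Proof. by elim: k => [|k IH]; rewrite ?in_ball0 // ballS in_setU IH. Qed.

Lemma ball_subS k x : ball r k x \subset ball r k.+1 x.
Proof. by rewrite ballS subsetUl. Qed.

Lemma ball_mono k m x : k <= m -> ball r k x \subset ball r m x.
Proof.
move=> /subnK <-; elim: (m - k) => [|j IH] //=.
exact: subset_trans IH (ball_subS _ _).
Qed.

Lemma ball_step k x w y : w \in ball r k x -> r w y -> y \in ball r k.+1 x.
Proof.
move=> Hw Hr; rewrite ballS in_setU inE; apply/orP; right.
by apply/existsP; exists w; rewrite Hw.
Qed.

Lemma ballSP k x y : y \in ball r k.+1 x ->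
  y \in ball r k x \/ exists2 w, w \in ball r k x & r w y.
Proof.
rewrite ballS in_setU inE => /orP [H|/existsP [w /andP [Hw Hr]]]; first by left.
by right; exists w.
Qed.

Lemma ball_trans a b x y u :
  y \in ball r a x -> u \in ball r b y -> u \in ball r (a + b) x.
Proof.
move=> Hy; elim: b u => [|b IH] u; first by rewrite in_ball0 addn0 => /eqP ->.
case/ballSP => [H|[w Hw Hr]]; rewrite addnS.
  exact: (subsetP (ball_subS _ _)) (IH _ H).
exact: ball_step (IH _ Hw) Hr.
Qed.

Lemma ball_sym : symmetric r -> forall k x y, y \in ball r k x -> x \in ball r k y.
Proof.
move=> rs; elim=> [|k IH] x y; first by rewrite !in_ball0 eq_sym.
case/ballSP => [H|[w Hw Hr]].
  exact: (subsetP (ball_subS _ _)) (IH _ _ H).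
have H1 : w \in ball r 1 y by apply: ball_step (ball_self _ _) _; rewrite rs.
by rewrite -add1n; apply: ball_trans H1 (IH _ _ Hw).
Qed.

Lemma ball_fix k x : ball r k.+1 x = ball r k x ->
  forall m, k <= m -> ball r m x = ball r k x.
Proof.
move=> Hk m /subnK <-; elim: (m - k) => [|j IH] //.
by rewrite addSn ballS IH -ballS.
Qed.

Lemma ball_card x k :
  (forall j, j < k -> ball r j.+1 x != ball r j x) -> k < #|ball r k x|.
Proof.
elim: k => [|k IH] H.
  by rewrite card_gt0; apply/set0Pn; exists x; apply: ball_self.
have H1 : k < #|ball r k x| by apply: IH => j Hj; apply: H; apply: ltnW.
apply: (leq_ltn_trans H1); apply: proper_card.
by rewrite properEneq ball_subS andbT eq_sym H.
Qed.

(* Every ball is contained in the ball of radius #|T| - 1, hence the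
   search range [iota 0 #|T|] of [dist] is large enough. *)
Lemma ball_sat x m : ball r m x \subset ball r #|T|.-1 x.
Proof.
have [j [Hj Hfix]] : exists j, j < #|T| /\ ball r j.+1 x = ball r j x.
  case: (boolP [exists j : 'I_#|T|, ball r j.+1 x == ball r j x]).
    by move=> /existsP [j /eqP Hj]; exists j.
  move=> Hn; exfalso.
  have : #|T| < #|ball r #|T| x|.
    apply: ball_card => j Hj; apply/negP => Heq; move/negP: Hn; apply.
    by apply/existsP; exists (Ordinal Hj).
  by rewrite ltnNge max_card.
have Hj' : j <= #|T|.-1 by rewrite -ltnS prednK // (leq_ltn_trans _ Hj).
case: (leqP m j) => Hm.
  exact: subset_trans (ball_mono x Hm) (ball_mono x Hj').
by rewrite (ball_fix Hfix (ltnW Hm)) -(ball_fix Hfix Hj').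
Qed.

Definition reach x y := exists k, y \in ball r k x.

Lemma reach_refl x : reach x x.
Proof. by exists 0; apply: ball_self. Qed.

Lemma reach_trans x y u : reach x y -> reach y u -> reach x u.
Proof. by move=> [a Ha] [b Hb]; exists (a + b); apply: ball_trans Ha Hb. Qed.

Lemma reach_sym : symmetric r -> forall x y, reach x y -> reach y x.
Proof. by move=> rs x y [k Hk]; exists k; apply: ball_sym. Qed.

Lemma path_ball x p : path r x p -> last x p \in ball r (size p) x.
Proof.
elim: p x => [|y p IH] x; first by rewrite /= in_set1.
rewrite [path _ _ _]/= => /andP [Hxy Hp].
have H1 : y \in ball r 1 x by apply: ball_step (ball_self _ _) Hxy.
by rewrite [last _ _]/= [size _]/= -add1n; apply: ball_trans H1 (IH _ Hp).
Qed.

Lemma connect_reach x y : connect r x y -> reach x y.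
Proof. by move=> /connectP [p Hp ->]; exists (size p); apply: path_ball. Qed.

Lemma distP x y : reach x y -> forall k, (dist r x y <= k) = (y \in ball r k x).
Proof.
move=> [m Hm] k.
have Hpos : 0 < #|T| by apply/card_gt0P; exists x.
have Hhas : has (fun k => y \in ball r k x) (iota 0 #|T|).
  apply/hasP; exists #|T|.-1; first by rewrite mem_iota add0n prednK ?leqnn.
  exact: (subsetP (ball_sat x m)).
have Hlt : dist r x y < #|T| by move: Hhas; rewrite has_find size_iota.
have Hin : y \in ball r (dist r x y) x by have := nth_find 0 Hhas; rewrite nth_iota.
apply/idP/idP => H; first exact: (subsetP (ball_mono x H)).
rewrite leqNgt; apply/negP => Hk.
have := before_find 0 Hk; rewrite nth_iota ?add0n ?H //.
exact: ltn_trans Hk Hlt.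
Qed.

Lemma dist_in x y : reach x y -> y \in ball r (dist r x y) x.
Proof. by move=> H; rewrite -distP. Qed.

Lemma dist_self x : dist r x x = 0.
Proof. by apply/eqP; rewrite -leqn0 distP ?in_ball0 //; apply: reach_refl. Qed.

Lemma dist0 x y : reach x y -> dist r x y = 0 -> y = x.
Proof. by move=> H H0; apply/eqP; rewrite -in_ball0 -distP // H0. Qed.

Lemma dist_tri x y u :
  reach x y -> reach y u -> dist r x u <= dist r x y + dist r y u.
Proof.
move=> Hxy Hyu; rewrite distP; last exact: reach_trans Hxy Hyu.
exact: ball_trans (dist_in Hxy) (dist_in Hyu).
Qed.

Lemma dist_sym : symmetric r -> forall x y, reach x y -> dist r x y = dist r y x.
Proof.
move=> rs x y H; have H' := reach_sym rs H.
by apply/eqP; rewrite eqn_leq !distP //; apply/andP; split;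
  apply: ball_sym => //; apply: dist_in.
Qed.

Lemma dist_pred x y : reach x y -> 0 < dist r x y ->
  exists w, [/\ reach x w, dist r x w = (dist r x y).-1 & r w y].
Proof.
move=> H Hp; have Hin := dist_in H.
rewrite -(prednK Hp) in Hin.
case/ballSP: Hin => [Hb|[w Hw Hr]].
  by move: Hb; rewrite -distP // leqNgt ltn_predL Hp.
have Rw : reach x w by exists (dist r x y).-1.
exists w; split => //.
apply/eqP; rewrite eqn_leq distP // Hw /=.
have : dist r x y <= (dist r x w).+1.
  by rewrite distP //; apply: ball_step (dist_in Rw) Hr.
by rewrite -{1}(prednK Hp) ltnS.
Qed.

Lemma dist_edge x y : r x y -> dist r x y <= 1.
Proof.
move=> Hxy; have Rxy : reach x y by exists 1; apply: ball_step (ball_self _ _) Hxy.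
by rewrite distP //; apply: ball_step (ball_self _ _) Hxy.
Qed.

Lemma dist_geodesic x y q k : reach x y -> dist r x y = q + k ->
  exists u, [/\ reach x u, dist r x u = q, reach u y & dist r u y <= k].
Proof.
elim: k y => [|k IH] y Hxy Hd.
  by exists y; rewrite Hd addn0 dist_self; split=> //; apply: reach_refl.
have [w [Rw Dw Ew]] := dist_pred Hxy (ltac:(by rewrite Hd addnS)).
rewrite Hd addnS /= in Dw.
have [u [Ru Du Ruw Duw]] := IH w Rw Dw.
have Rwy : reach w y by exists 1; apply: ball_step (ball_self _ _) Ew.
exists u; split=> //; first exact: reach_trans Ruw Rwy.
by apply: leq_trans (dist_tri Ruw Rwy) _; rewrite -addn1 leq_add // dist_edge.
Qed.

End Balls.

Section LevelCounting.

Lemma sum_levels_ge (g : nat -> nat) w R : (forall q, 0 < q <= R -> w <= g q) ->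
  R * w <= \sum_(q < R.+1) g q.
Proof.
elim: R => [|R IH] H; first by rewrite mul0n.
rewrite big_ord_recr /= mulSn addnC; apply: leq_add; last by apply: H; rewrite leqnn.
by apply: IH => q /andP [Hq HqR]; apply: H; rewrite Hq /= ltnW.
Qed.

Lemma sum_levels_weighted_ge (g : nat -> nat) w R :
  (forall q, 0 < q <= R -> w <= g q) -> w * 'C(R, 2) <= \sum_(q < R.+1) (R - q) * g q.
Proof.
elim: R => [|R IH] H; first by rewrite bin0n muln0.
have H' : forall q, 0 < q <= R -> w <= g q.
  by move=> q /andP [Hq HqR]; apply: H; rewrite Hq /= ltnW.
rewrite big_ord_recr /= subnn mul0n addn0.
have -> : \sum_(i < R.+1) (R.+1 - i) * g i = \sum_(i < R.+1) ((R - i) * g i + g i).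
  by apply: eq_bigr => i _; rewrite subSn ?mulSn 1?addnC // -ltnS.
rewrite big_split /= binS bin1 mulnDr; apply: leq_add; first exact: IH.
by rewrite mulnC; apply: sum_levels_ge.
Qed.

Lemma sum_levels_ge_heavy (g : nat -> nat) w h R t0 :
  (forall q, 0 < q <= R -> w <= g q) -> 0 < t0 <= R -> h <= g t0 -> w <= h ->
  R.-1 * w + h <= \sum_(q < R.+1) g q.
Proof.
move=> H /andP [Ht0 HtR] Hh Hwh.
have Ht' : t0 < R.+1 by rewrite ltnS.
pose g' q := if q == t0 then g q - (h - w) else g q.
have H1 : R * w <= \sum_(q < R.+1) g' q.
  apply: sum_levels_ge => q Hq; rewrite /g'.
  by case: eqP => [->|_]; [lia | exact: H].
have E : \sum_(i < R.+1 | i != Ordinal Ht') g' i =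
         \sum_(i < R.+1 | i != Ordinal Ht') g i.
  apply: eq_bigr => i Hi; rewrite /g'; case: eqP => // Heq.
  by move: Hi; rewrite -(inj_eq val_inj) /= Heq eqxx.
rewrite (bigD1 (Ordinal Ht')) // E /g' /= eqxx in H1.
rewrite (bigD1 (Ordinal Ht')) //=.
have HR : 0 < R by apply: leq_trans HtR.
move: H1; set X := \sum_(i < R.+1 | _) g i.
by rewrite -(prednK HR) mulSn; lia.
Qed.

Lemma sum_by_level (I : eqType) (l : seq I) (t : I -> nat) R (f : I -> nat) :
  (forall s, s \in l -> t s <= R) ->
  \sum_(s <- l) f s = \sum_(q < R.+1) \sum_(s <- l | t s == q) f s.
Proof.
move=> H.
under [RHS]eq_bigr do rewrite big_mkcond.
rewrite exchange_big /= big_seq [RHS]big_seq; apply: eq_bigr => s Hs.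
have Hs' : t s < R.+1 by rewrite ltnS H.
rewrite (bigD1 (Ordinal Hs')) //= eqxx big1 ?addn0 // => i Hi.
by case: eqP => // E; move: Hi; rewrite -(inj_eq val_inj) /= -E eqxx.
Qed.

(* With M the total weight: sum a_s t_s + w C(R,2) <= R M (few items can be
   far) and (R - 1) w + h <= M (there are R nonempty levels). *)
Lemma level_bound (I : eqType) (l : seq I) (a t : I -> nat) (R w h : nat) (z : I) :
  uniq l -> (forall s, s \in l -> t s <= R) ->
  (forall q, 0 < q <= R -> exists2 s, s \in l & t s = q) ->
  (forall s, s \in l -> w <= a s) -> z \in l -> h <= a z -> w <= h -> 0 < t z ->
  (\sum_(s <- l) a s * t s + w * 'C(R, 2) <= R * \sum_(s <- l) a s) /\
  (R.-1 * w + h <= \sum_(s <- l) a s).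
Proof.
move=> U Ht Hlev Hw Hz Hh Hwh Htz.
pose g q := \sum_(s <- l | t s == q) a s.
have g_ge s : s \in l -> a s <= g (t s).
  by move=> Hs; rewrite /g big_mkcond (bigD1_seq s) //= eqxx leq_addr.
have Hg q : 0 < q <= R -> w <= g q.
  by move=> Hq; have [s Hs <-] := Hlev q Hq; apply: leq_trans (Hw _ Hs) (g_ge _ Hs).
have HM : \sum_(s <- l) a s = \sum_(q < R.+1) g q by apply: sum_by_level.
split; last first.
  rewrite HM; apply: (sum_levels_ge_heavy (t0 := t z)) => //; first by rewrite Htz Ht.
  exact: leq_trans Hh (g_ge _ Hz).
have -> : R * \sum_(s <- l) a s =
          \sum_(s <- l) a s * t s + \sum_(s <- l) a s * (R - t s).
  rewrite -big_split /= big_distrr /= big_seq [RHS]big_seq; apply: eq_bigr => s Hs.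
  by rewrite -mulnDr subnKC ?Ht // mulnC.
rewrite leq_add2l.
have -> : \sum_(s <- l) a s * (R - t s) = \sum_(q < R.+1) (R - q) * g q.
  rewrite (sum_by_level (fun s => a s * (R - t s)) Ht); apply: eq_bigr => q _.
  by rewrite /g big_distrr /=; apply: eq_bigr => s /eqP ->; apply: mulnC.
exact: sum_levels_weighted_ge.
Qed.

End LevelCounting.

Section RationalInequalities.
Local Open Scope ring_scope.

Lemma bin2_rat (R : nat) : ('C(R, 2)%:R : rat) = R%:R * (R%:R - 1) / 2.
Proof.
elim: R => [|R IH]; first by rewrite bin0n !mul0r.
by rewrite binS bin1 natrD IH -natr1; field.
Qed.

(* The bound G(M) for (weight of the first center) h, (other weights) >= w
   and total weight M; with y = M - h,
   G = y^3 + 3 h y^2 + 3 h w y. *)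
Definition energy_cubic (w h M : rat) : rat :=
  (M - h) ^+ 3 + 3 * h * (M - h) ^+ 2 + 3 * h * w * (M - h).

Lemma energy_cubic_ge0 (w h M : rat) : 0 < w -> w <= h -> h <= M ->
  0 <= energy_cubic w h M.
Proof.
move=> Hw Hwh HM; rewrite /energy_cubic.
have Hy : 0 <= M - h by lra.
have H1 : 0 <= (M - h) ^+ 3 by apply: exprn_ge0.
have H2 : 0 <= 3 * h * (M - h) ^+ 2 by apply: mulr_ge0; [lra | apply: exprn_ge0].
have H3 : 0 <= 3 * h * w * (M - h) by apply: mulr_ge0 => //; apply: mulr_ge0; lra.
lra.
Qed.

(* Distances from a new center: if the levels give K <= 3 (R M - w C(R,2))
   and (R - 1) w + h <= M, then 2 w K <= 3 (M - h + w) (M + h), uniformly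
   in the number R of levels. *)
Lemma far_sum_bound (w h M R K : rat) : 0 < w -> w <= h -> 1 <= R ->
  (R - 1) * w + h <= M -> K <= 3 * (R * M - w * (R * (R - 1) / 2)) ->
  2 * w * K <= 3 * (M - h + w) * (M + h).
Proof.
move=> Hw Hwh HR HM HK.
have H1 : 0 <= (M - h + w - w * R) * (M + h - w * R) by apply: mulr_ge0; nra.
have E : 2 * w * (3 * (R * M - w * (R * (R - 1) / 2))) =
         3 * (2 * (w * R) * M - (w * R) ^+ 2 + (w * R) * w) by field.
have : 2 * w * K <= 2 * w * (3 * (R * M - w * (R * (R - 1) / 2))).
  by rewrite ler_pM2l ?mulr_gt0.
rewrite E; nra.
Qed.

(* Adding a center of weight a >= w, whose distance contribution is bounded
   as in [far_sum_bound], keeps the energy below G. *)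
Lemma energy_cubic_step (w h M a : rat) : 0 < w -> w <= h -> h <= M -> w <= a ->
  energy_cubic w h M + 3 * a * ((M - h + w) * (M + h)) <= energy_cubic w h (M + a).
Proof.
move=> Hw Hwh HM Ha.
have E : energy_cubic w h (M + a) - (energy_cubic w h M + 3 * a * ((M - h + w) * (M + h))) =
  a * (3 * (M - h) * (a - w) + a ^+ 2 + 3 * h * (a - w)) by rewrite /energy_cubic; ring.
rewrite -subr_ge0 E; apply: mulr_ge0; first lra.
have : 0 <= (M - h) * (a - w) by apply: mulr_ge0; lra.
have : 0 <= h * (a - w) by apply: mulr_ge0; lra.
nra.
Qed.

(* For total weight n the energy bound plus the 4 n^2 rounding error is
   dominated by the right-hand side of the theorem (with N = n - h + w). *)
Lemma energy_cubic_final (w h n : rat) : 4 <= w -> w <= h -> h <= n ->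
  energy_cubic w h n + 4 * w * n ^+ 2 <=
  (n - h + w) * (n - h + w - 1) * (n + 2 * (h - 1)) + 4 * w * (n * (n - 1)).
Proof.
move=> Hw Hwh Hn; set y := n - h.
have Hy : 0 <= y by rewrite /y; lra.
have E : (n - h + w) * (n - h + w - 1) * (n + 2 * (h - 1)) + 4 * w * (n * (n - 1))
         - (energy_cubic w h n + 4 * w * n ^+ 2) =
    (2 * w - 3) * y ^+ 2 + (3 * h * w - 3 * h + w ^+ 2 - 9 * w + 2) * y
    + w * (3 * h * w - 7 * h - 2 * w + 2).
  by rewrite /energy_cubic /y; ring.
rewrite -subr_ge0 E.
have A1 : 0 <= (2 * w - 3) * y ^+ 2 by apply: mulr_ge0; [lra | apply: exprn_ge0].
have B : 0 <= 3 * h * w - 3 * h + w ^+ 2 - 9 * w + 2.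
  have : 0 <= (h - w) * (w - 1) by apply: mulr_ge0; lra.
  have : 0 <= (w - 4) * (w - 4) by apply: mulr_ge0; lra.
  nra.
have A2 : 0 <= (3 * h * w - 3 * h + w ^+ 2 - 9 * w + 2) * y by apply: mulr_ge0.
have C : 0 <= 3 * h * w - 7 * h - 2 * w + 2.
  have : 0 <= (h - w) * (3 * w - 7) by apply: mulr_ge0; lra.
  have : 0 <= (w - 4) * (w - 4) by apply: mulr_ge0; lra.
  nra.
have A3 : 0 <= w * (3 * h * w - 7 * h - 2 * w + 2) by apply: mulr_ge0; lra.
lra.
Qed.

Lemma avg_of_wiener_bound (W C P Q X d : rat) : 2 * C = P -> 0 < P -> 0 < d ->
  2 * d * W <= Q * X + 4 * d * P -> W / C <= Q / P * (X / d) + 4.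
Proof.
move=> HC HP Hd HW.
have HC0 : C != 0 by apply: lt0r_neq0; lra.
have HP0 : P != 0 by apply: lt0r_neq0.
have Hd0 : d != 0 by apply: lt0r_neq0.
have E : Q / P * (X / d) + 4 - W / C = (Q * X + 4 * d * P - 2 * d * W) / (d * P).
  by rewrite -HC; field; rewrite HC0 Hd0.
by rewrite -subr_ge0 E divr_ge0 ?mulr_ge0 ?subr_ge0 // ltW.
Qed.

End RationalInequalities.

Section Centers.
Variables (T : finType) (e : rel T).
Hypotheses (e_sym : symmetric e) (e_conn : connected_graph e).

Lemma reach_all x y : reach e x y.
Proof. exact: connect_reach (e_conn x y). Qed.

Lemma gdist_sym x y : dist e x y = dist e y x.
Proof. exact: (dist_sym e_sym (reach_all x y)). Qed.

Lemma gdist_tri x y u : dist e x u <= dist e x y + dist e y u.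
Proof. exact: dist_tri (reach_all _ _) (reach_all _ _). Qed.

Definition near (S : pred T) : rel T := fun x y => [&& S x, S y & dist e x y <= 3].

Lemma near_sym S : symmetric (near S).
Proof. by move=> x y; rewrite /near andbCA gdist_sym. Qed.

Lemma near_ball (S : pred T) k x y : S x -> y \in ball (near S) k x ->
  S y /\ dist e x y <= 3 * k.
Proof.
move=> Sx; elim: k y => [|k IH] y.
  by rewrite in_ball0 => /eqP ->; rewrite dist_self.
case/ballSP => [/IH [Sy Hd]|[w /IH [_ Hw] /and3P [_ Sy Hwy]]].
  by split=> //; rewrite mulnS; lia.
by split=> //; have := gdist_tri x w y; rewrite mulnS; lia.
Qed.

Variable z : T.

Inductive center_seq : seq T -> Prop :=
| CenterRoot : center_seq [:: z]
| CenterAdd l v : center_seq l -> (forall s, s \in l -> 3 <= dist e s v) ->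
    (exists2 p, p \in l & dist e p v <= 3) -> center_seq (rcons l v).

Lemma far_notin (l : seq T) v : (forall s, s \in l -> 3 <= dist e s v) -> v \notin l.
Proof. by move=> H; apply/negP => /H; rewrite dist_self. Qed.

Lemma center_seq_uniq l : center_seq l -> uniq l.
Proof. by elim=> [//|l' v _ IH Hfar _]; rewrite rcons_uniq IH far_notin. Qed.

Lemma center_seq_root l : center_seq l -> z \in l.
Proof. by elim=> [|l' v _ IH _ _]; rewrite ?mem_head // mem_rcons inE IH orbT. Qed.

Lemma center_seq_sep l : center_seq l ->
  forall x y, x \in l -> y \in l -> x != y -> 3 <= dist e x y.
Proof.
elim=> [|l' v _ IH Hfar _] x y; first by rewrite !inE => /eqP -> /eqP ->; rewrite eqxx.
rewrite !mem_rcons !inE => /orP [/eqP ->|Hx] /orP [/eqP ->|Hy]; rewrite ?eqxx //.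
- by move=> _; rewrite gdist_sym; apply: Hfar.
- by move=> _; apply: Hfar.
- exact: IH.
Qed.

Lemma center_seq_near l : center_seq l -> forall S : pred T, {subset l <= S} ->
  forall s, s \in l -> reach (near S) z s.
Proof.
elim=> [|l' v _ IH _ [p Hp Hpv]] S HS s.
  by rewrite inE => /eqP ->; apply: reach_refl.
have HS' : {subset l' <= S} by move=> x Hx; apply: HS; rewrite mem_rcons inE Hx orbT.
rewrite mem_rcons inE => /orP [/eqP ->|Hs]; last exact: IH.
apply: reach_trans (IH S HS' p Hp) _; exists 1; apply: ball_step (ball_self _ _ _) _.
apply/and3P; split=> //; first exact: HS'.
by apply: HS; rewrite mem_rcons mem_head.
Qed.

Definition energy (a : T -> nat) (l : seq T) : nat :=
  \sum_(s <- l) \sum_(t <- l) a s * a t * dist e s t.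

Lemma energy_rcons a l v :
  energy a (rcons l v) = energy a l + 2 * (a v * \sum_(s <- l) a s * dist e v s).
Proof.
rewrite /energy !big_rcons /= dist_self muln0 addn0.
under eq_bigr do rewrite big_rcons /=.
rewrite big_split /= -addnA; congr (_ + _).
rewrite mul2n -addnn; congr (_ + _).
  by rewrite big_distrr /=; apply: eq_bigr => s _; rewrite gdist_sym; ring.
by rewrite big_distrr /=; apply: eq_bigr => s _; rewrite mulnA.
Qed.

(* Levels of a new center v: measuring distance from v in the auxiliary
   graph, with R levels, [level_bound] bounds the distances to v. *)
Lemma new_center_levels (a : T -> nat) w h l v : center_seq l ->
  (forall s, s \in l -> 3 <= dist e s v) -> (exists2 p, p \in l & dist e p v <= 3) ->
  (forall s, s \in l -> w <= a s) -> h <= a z -> w <= h ->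
  exists2 R, 0 < R &
    \sum_(s <- l) a s * dist e v s + 3 * (w * 'C(R, 2)) <= 3 * (R * \sum_(s <- l) a s)
    /\ R.-1 * w + h <= \sum_(s <- l) a s.
Proof.
move=> Hl Hfar Hnear Ha Hz Hwh.
have Hgr : center_seq (rcons l v) by apply: CenterAdd.
have Hzl : z \in l := center_seq_root Hl.
pose S : pred T := fun x => x \in rcons l v.
have Sv : S v by rewrite /S mem_rcons mem_head.
have Hreach s : s \in l -> reach (near S) v s.
  move=> Hs; have Hz' := center_seq_near Hgr (fun x Hx => Hx).
  apply: reach_trans (reach_sym (@near_sym S) (Hz' _ Sv)) (Hz' _ _).
  by rewrite mem_rcons inE Hs orbT.
pose t s := dist (near S) v s.
have [smax Hsmax Hmax] := @arg_maxnP T z (fun s => s \in l) t Hzl.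
set R := t smax.
have Hlev q : 0 < q <= R -> exists2 s, s \in l & t s = q.
  move=> /andP [Hq HqR].
  have [u [Ru Du _ _]] := dist_geodesic (Hreach _ Hsmax) (esym (subnKC HqR)).
  have [Su _] := near_ball Sv (dist_in Ru).
  exists u => //; move: Su; rewrite /S mem_rcons inE => /orP [/eqP Euv|//].
  by move: Du; rewrite Euv dist_self => E; rewrite -E in Hq.
have Htz : 0 < t z.
  rewrite lt0n; apply/negP => /eqP /(dist0 (Hreach _ Hzl)) Ezv.
  by move: (far_notin Hfar); rewrite -Ezv Hzl.
have [HA HB] := level_bound (center_seq_uniq Hl) Hmax Hlev Ha Hzl Hz Hwh Htz.
exists R; first exact: leq_trans Htz (Hmax _ Hzl).
split=> //.
have HK : \sum_(s <- l) a s * dist e v s <= 3 * \sum_(s <- l) a s * t s.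
  rewrite big_distrr /= big_seq [X in _ <= X]big_seq; apply: leq_sum => s Hs.
  have [_ Hd] := near_ball Sv (dist_in (Hreach _ Hs)).
  by rewrite mulnCA leq_mul2l Hd orbT.
by apply: leq_trans (leq_add HK (leqnn _)) _; rewrite -mulnDr leq_mul2l HA orbT.
Qed.

Lemma new_center_far_sum (a : T -> nat) w h l v : center_seq l ->
  (forall s, s \in l -> 3 <= dist e s v) -> (exists2 p, p \in l & dist e p v <= 3) ->
  (forall s, s \in l -> w <= a s) -> h <= a z -> w <= h -> 0 < w ->
  (2 * w%:R * (\sum_(s <- l) a s * dist e v s)%:R <=
   3 * ((\sum_(s <- l) a s)%:R - h%:R + w%:R) * ((\sum_(s <- l) a s)%:R + h%:R) :> rat)%R.
Proof.
move=> Hl Hfar Hnear Ha Hz Hwh Hw0.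
have [R HR [HK HM]] := new_center_levels Hl Hfar Hnear Ha Hz Hwh.
have ER : ((R.-1)%:R = R%:R - 1 :> rat)%R by rewrite -{2}(prednK HR) -natr1 addrK.
apply: (@far_sum_bound _ _ _ R%:R); rewrite ?ltr0n ?ler_nat ?ler1n //.
  by move: HM; rewrite -(ler_nat rat) natrD natrM ER.
by move: HK; rewrite -(ler_nat rat) !natrD !natrM bin2_rat; lra.
Qed.

Lemma energy_bound (a : T -> nat) (w h : nat) l : center_seq l ->
  (forall s, s \in l -> w <= a s) -> h <= a z -> w <= h -> 0 < w ->
  (w%:R * (energy a l)%:R <= energy_cubic w%:R h%:R (\sum_(s <- l) a s)%:R :> rat)%R.
Proof.
move=> Hl; elim: l / Hl => [|l v Hl IH Hfar Hnear] Ha Hz Hwh Hw0.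
  rewrite /energy !big_seq1 dist_self muln0 mulr0.
  by apply: energy_cubic_ge0; rewrite ?ltr0n ?ler_nat.
have Ha' s : s \in l -> w <= a s by move=> Hs; apply: Ha; rewrite mem_rcons inE Hs orbT.
have Hav : w <= a v by apply: Ha; rewrite mem_rcons mem_head.
have HhM : h <= \sum_(s <- l) a s.
  rewrite (bigD1_seq z) ?center_seq_root ?center_seq_uniq //=.
  exact: leq_trans Hz (leq_addr _ _).
have HK := new_center_far_sum Hl Hfar Hnear Ha' Hz Hwh Hw0.
have HE := IH Ha' Hz Hwh Hw0.
have Hstep := @energy_cubic_step w%:R h%:R (\sum_(s <- l) a s)%:R (a v)%:R.
rewrite ltr0n !ler_nat in Hstep; have {}Hstep := Hstep Hw0 Hwh HhM Hav.
have Hav0 : (0 <= (a v)%:R :> rat)%R by [].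
have := ler_wpM2l Hav0 HK.
rewrite energy_rcons big_rcons /= !natrD !natrM; nra.
Qed.

Definition candidate (l : seq T) (v : T) : bool :=
  all (fun s => 3 <= dist e s v) l && has (fun s => dist e s v == 3) l.

Definition extend (l : seq T) : seq T :=
  if [pick v | candidate l v] is Some v then rcons l v else l.

(* #|T| steps suffice to saturate, since center sequences are duplicate-free. *)
Definition centers : seq T := iter #|T| extend [:: z].

Lemma center_seq_extend l : center_seq l -> center_seq (extend l).
Proof.
move=> Hl; rewrite /extend; case: pickP => // v /andP [/allP Hfar /hasP [p Hp Hd]].
by apply: CenterAdd => //; exists p; rewrite // (eqP Hd).
Qed.

Lemma center_seq_iter k : center_seq (iter k extend [:: z]).
Proof. by elim: k => [|k IH]; [apply: CenterRoot | apply: center_seq_extend]. Qed.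

Lemma center_seq_centers : center_seq centers.
Proof. exact: center_seq_iter. Qed.

Lemma iter_extend k :
  k < size (iter k extend [:: z]) \/ extend (iter k extend [:: z]) = iter k extend [:: z].
Proof.
elim: k => [|k IH]; first by left.
rewrite iterS; set l := iter k extend [:: z].
case E: (extend l == l); first by right; rewrite !(eqP E).
left; case: IH => [H|H]; last by rewrite H eqxx in E.
move: E; rewrite /extend; case: pickP => [v _ _|_]; last by rewrite eqxx.
by rewrite size_rcons ltnS.
Qed.

Lemma centers_maximal v : ~~ candidate centers v.
Proof.
apply/negP => Hc.
have Hfix : extend centers = centers.
  case: (iter_extend #|T|) => // Hsize; exfalso.
  have := uniq_leq_size (center_seq_uniq center_seq_centers) (fun x _ => mem_enum T x).
  by rewrite -cardT leqNgt Hsize.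
move: Hfix; rewrite /extend; case: pickP => [u _ E|/(_ v)]; last by rewrite Hc.
by have := congr1 size E; rewrite size_rcons; lia.
Qed.

(* Every vertex is within distance 2 of a center: otherwise the vertex at
   distance 3 on a shortest path from the nearest center would be a
   candidate. *)
Lemma centers_cover v : exists2 s, s \in centers & dist e s v <= 2.
Proof.
have Hz : z \in centers := center_seq_root center_seq_centers.
have [s0 Hs0 Hmin] := @arg_minnP T z (fun s => s \in centers) (fun s => dist e s v) Hz.
exists s0 => //; rewrite leqNgt; apply/negP => H3.
have [u [_ Du _ Duv]] := dist_geodesic (reach_all s0 v) (esym (subnKC H3)).
move/negP: (centers_maximal u); apply; apply/andP; split.
  apply/allP => s Hs; have := Hmin s Hs; have := gdist_tri s u v; lia.
by apply/hasP; exists s0; rewrite ?Du.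
Qed.

Definition center_of (x : T) : T := [arg min_(s < z in centers) dist e s x].

Lemma center_ofP x : center_of x \in centers /\
  forall s, s \in centers -> dist e (center_of x) x <= dist e s x.
Proof.
rewrite /center_of; case: arg_minnP; first exact: center_seq_root center_seq_centers.
by move=> s Hs Hmin; split.
Qed.

Lemma center_of_near x : dist e (center_of x) x <= 2.
Proof.
have [_ Hmin] := center_ofP x; have [s Hs Hd] := centers_cover x.
exact: leq_trans (Hmin s Hs) Hd.
Qed.

(* A center owns its closed neighbourhood, since centers are 3 apart. *)
Lemma center_of_nbhd s y : s \in centers -> dist e s y <= 1 -> center_of y = s.
Proof.
move=> Hs Hd; have [Hc Hmin] := center_ofP y.
apply/eqP; apply: contraT => Hne.
have := center_seq_sep center_seq_centers Hc Hs Hne.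
have := gdist_tri (center_of y) y s; have := Hmin s Hs; rewrite (gdist_sym y s); lia.
Qed.

Definition cell_size (s : T) : nat := #|[set x | center_of x == s]|.

Lemma cell_size_ge (e_irr : irreflexive e) s : s \in centers -> (deg e s).+1 <= cell_size s.
Proof.
move=> Hs; have := cardsU1 s [set y | e s y]; rewrite inE e_irr /= add1n => <-.
apply: subset_leq_card; apply/subsetP => y; rewrite !inE => /predU1P [->|Hy].
  by apply/eqP; apply: center_of_nbhd; rewrite ?dist_self.
by apply/eqP; apply: center_of_nbhd; rewrite ?dist_edge.
Qed.

Lemma sum_by_center (F : T -> nat) :
  \sum_x F (center_of x) = \sum_(s <- centers) cell_size s * F s.
Proof.
have U := center_seq_uniq center_seq_centers.
transitivity (\sum_x \sum_(s <- centers) (center_of x == s) * F s).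
  apply: eq_bigr => x _; have [Hc _] := center_ofP x.
  rewrite (bigD1_seq (center_of x)) //= eqxx mul1n big1 ?addn0 //.
  by move=> s /negbTE; rewrite eq_sym => ->.
rewrite exchange_big; apply: eq_bigr => s _.
rewrite -big_distrl /= /cell_size -sum1_card [in RHS]big_mkcond /=.
by congr (_ * _); apply: eq_bigr => x _; rewrite inE; case: (center_of x == s).
Qed.

Lemma cell_size_sum : \sum_(s <- centers) cell_size s = #|T|.
Proof.
have := sum_by_center (fun _ => 1); rewrite sum1_card => ->.
by apply: eq_bigr => s _; rewrite muln1.
Qed.

(* Moving both endpoints to their centers changes a distance by at most 4. *)
Lemma dist_sum_le_energy :
  \sum_x \sum_y dist e x y <= energy cell_size centers + 4 * #|T| * #|T|.
Proof.
have H4 x y : dist e x y <= dist e (center_of x) (center_of y) + 4.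
  have := gdist_tri x (center_of x) y; have := gdist_tri (center_of x) (center_of y) y.
  have := center_of_near x; have := center_of_near y.
  rewrite (gdist_sym x (center_of x)); lia.
apply: leq_trans (_ : \sum_x \sum_y (dist e (center_of x) (center_of y) + 4) <= _).
  by apply: leq_sum => x _; apply: leq_sum => y _; apply: H4.
under eq_bigr do rewrite big_split /= sum_nat_const.
rewrite big_split /= sum_nat_const.
suff -> : \sum_x \sum_y dist e (center_of x) (center_of y) = energy cell_size centers.
  by rewrite leq_add2l -mulnA mulnC [_ * 4]mulnC -mulnA.
transitivity (\sum_x \sum_(t <- centers) cell_size t * dist e (center_of x) t).
  by apply: eq_bigr => x _; rewrite (sum_by_center (fun t => dist e (center_of x) t)).
rewrite (sum_by_center (fun s => \sum_(t <- centers) cell_size t * dist e s t)).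
by apply: eq_bigr => s _; rewrite big_distrr /=; apply: eq_bigr => t _; rewrite mulnA.
Qed.

Lemma dist_sum_bound (e_irr : irreflexive e) w : 0 < w ->
  (forall x, w <= (deg e x).+1) -> w <= (deg e z).+1 ->
  (w%:R * (\sum_x \sum_y dist e x y)%:R <=
   energy_cubic w%:R (deg e z).+1%:R #|T|%:R + 4 * w%:R * #|T|%:R ^+ 2 :> rat)%R.
Proof.
move=> Hw0 Hw Hwh.
have Hcs := center_seq_centers.
have Ha s : s \in centers -> w <= cell_size s.
  by move=> Hs; apply: leq_trans (Hw s) (cell_size_ge e_irr Hs).
have Hh : (deg e z).+1 <= cell_size z by apply: cell_size_ge (center_seq_root Hcs).
have := energy_bound Hcs Ha Hh Hwh Hw0; rewrite cell_size_sum => HE.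
have HS := dist_sum_le_energy; rewrite -(ler_nat rat) natrD !natrM in HS.
have Hw0' : (0 <= w%:R :> rat)%R by [].
by have := ler_wpM2l Hw0' HS; rewrite expr2; lra.
Qed.

End Centers.

Lemma bigmin_seq_le (I : eqType) (r : seq I) (F : I -> nat) k x : x \in r ->
  \big[minn/k]_(i <- r) F i <= F x.
Proof.
elim: r => [//|a r IH]; rewrite inE big_cons => /predU1P [->|Hx].
  exact: geq_minl.
exact: leq_trans (geq_minr _ _) (IH Hx).
Qed.

Lemma mindeg_le (T : finType) (e : rel T) x : mindeg e <= deg e x.
Proof. by apply: bigmin_seq_le; rewrite mem_index_enum. Qed.

Lemma mindeg_card (T : finType) (e : rel T) : mindeg e <= #|T|.
Proof.
rewrite /mindeg; elim/big_ind: _ => // [a b Ha Hb|x _]; last exact: max_card.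
by rewrite geq_min Ha.
Qed.

Lemma deg_lt_card (T : finType) (e : rel T) x : irreflexive e -> deg e x < #|T|.
Proof.
move=> e_irr; rewrite /deg -cardsT; apply: proper_card; rewrite properT.
by apply/negP => /eqP E; have := in_setT x; rewrite -E inE e_irr.
Qed.

Lemma wiener_bound (T : finType) (e : rel T) :
  simple_graph e -> connected_graph e -> 3 <= mindeg e ->
  let n := #|T| in let delta := mindeg e in let Delta := maxdeg e in
  let N := n - Delta + delta in
  2 * delta.+1 * wiener e <= N * (N - 1) * (n + 2 * Delta) + 4 * delta.+1 * (n * (n - 1)).
Proof.
move=> [e_sym e_irr] e_conn Hd; cbv zeta.
set n := #|T|; set delta := mindeg e; set Delta := maxdeg e.
have Hn3 : 3 <= n := leq_trans Hd (mindeg_card e).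
have [z Hz] := @bigop.eq_bigmax T (deg e) (ltnW (ltnW Hn3)).
have HDz : Delta = deg e z by rewrite /Delta /maxdeg Hz.
have HDn : Delta < n by rewrite HDz deg_lt_card.
have HdD : delta <= Delta by rewrite HDz mindeg_le.
have HS := dist_sum_bound e_sym e_conn (z := z) e_irr (ltn0Sn delta)
  (fun x => mindeg_le e x) (ltac:(by rewrite -HDz ltnS)).
have HW : 2 * wiener e <= \sum_x \sum_y dist e x y by rewrite /wiener mulnC leq_divM.
have HF := @energy_cubic_final delta.+1%:R Delta.+1%:R n%:R.
rewrite !ler_nat !ltnS Hd HdD HDn in HF; have {}HF := HF isT isT isT.
have HN : 1 <= n - Delta + delta by rewrite addn_gt0 (leq_trans _ Hd) ?orbT.
rewrite -(ler_nat rat) natrD !natrM (natrB _ HN) (natrB _ (ltnW (ltnW Hn3))).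
rewrite !natrD natrB ?(ltnW HDn) //.
move: HS HW HF; set S := \sum_x \sum_y dist e x y.
rewrite -HDz -(ler_nat rat) natrM -!natr1 => HS HW HF.
have Hw0 : (0 <= delta%:R + 1 :> rat)%R by rewrite natr1 ler0n.
have := ler_wpM2l Hw0 HW; clear -HS HF; lra.
Qed.

Local Open Scope ring_scope.

Theorem theorem4p1 (T : finType) (e : rel T) :
  simple_graph e -> connected_graph e -> (3 <= mindeg e)%N ->
  let n := #|T| in
  let delta := mindeg e in
  let Delta := maxdeg e in
  let N := (n - Delta + delta)%N in
  avg_dist e <=
    ((N * (N - 1))%N%:R / ((n * (n - 1))%N%:R : rat))
      * ((n + 2 * Delta)%N%:R / (delta + 1)%N%:R) + 4.
Proof.
move=> Hsimple Hconn Hd; have HW := wiener_bound Hsimple Hconn Hd.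
cbv zeta in HW |- *.
have Hn3 : (3 <= #|T|)%N := leq_trans Hd (mindeg_card e).
apply: avg_of_wiener_bound.
- by rewrite bin2_rat natrM natrB ?(ltnW (ltnW Hn3)) //; field.
- by rewrite ltr0n muln_gt0 subn_gt0 (ltnW (ltnW Hn3)) (ltnW Hn3).
- by rewrite ltr0n addn1.
- by rewrite -[2]/(2%:R) -[4]/(4%:R) -!natrM -natrD ler_nat addn1.
Qed.
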